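(* Let $m\ge 2$ and let $k_1,k_2,\dots,k_{2m}$ be positive integers such that $k_i+k_{i+1}\ge 3$ for all $i\in\{1,3,\dots,2m-1\}$. Then every tournament of order $m+\sum_{i=1}^{2m}k_i$ contains a subdivision of $C(k_1,k_2,\dots,k_{2m})$ having at least $m$ non-dilated blocks.
   Context: A tournament is an orientation of a complete graph. A block of an oriented path or cycle is a maximal directed subpath. $C(k_1,k_2,\dots,k_{2m})$ denotes the oriented cycle with $2m$ blocks of consecutive lengths $k_1,k_2,\dots,k_{2m}$. A subdivision of a digraph $H$ is obtained by replacing each arc $(u,v)$ by a directed $uv$-path of length at least $1$ (internally disjoint); a subdivision $H'$ of a $2m$-blocks cycle $C$ is again a $2m$-blocks cycle whose blocks correspond to those of $C$. A block of $H'$ is dilated if its length in $H'$ is strictly greater than the length of the corresponding block of $C$, and non-dilated otherwise. *)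

From mathcomp Require Import all_boot.
Set Implicit Arguments. Unset Strict Implicit. Unset Printing Implicit Defensive.

Definition tournament (T : finType) (adj : rel T) : Prop :=
  (forall x, ~~ adj x x) /\ (forall x y, x != y -> adj x y = ~~ adj y x).

(* 0-based index of the block containing arc position j of the cycle with
   consecutive block lengths l (valid for j < sumn l): the number of
   (inclusive) prefix sums of l that are <= j. *)
Definition block_of (l : seq nat) (j : nat) : nat :=
  count (fun i => sumn (take i.+1 l) <= j) (iota 0 (size l)).

(* T contains (as a subdigraph) the oriented cycle C(l_1,...,l_r):
   vertices f 0, ..., f (n-1) (distinct), n = sumn l, arc position j joins
   f j and f (j+1 mod n); arcs of blocks 1,3,5,... (0-based even index) are
   oriented along the traversal, those of blocks 2,4,... against it. *)
Definition contains_cycle (T : finType) (adj : rel T) (l : seq nat) : Prop :=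
  exists f : 'I_(sumn l) -> T,
    injective f /\
    forall j : 'I_(sumn l),
      if ~~ odd (block_of l j) then adj (f j) (f (ordS j))
      else adj (f (ordS j)) (f j).

(* Block lengths l of a subdivision of C(k): each block of length k_i becomes
   a directed path of length l_i >= k_i. *)
Definition subdivision_blocks (k l : seq nat) : Prop :=
  size l = size k /\ forall i, i < size k -> nth 0 k i <= nth 0 l i.

Definition non_dilated (k l : seq nat) : nat :=
  count (fun i => nth 0 l i == nth 0 k i) (iota 0 (size k)).

(* Pair the blocks as (k_1,k_2), ..., (k_{2m-1},k_{2m}). Every tournament on p+q+1
   vertices, with p, q >= 1 and p+q >= 3, is spanned by a wedge: two disjoint directed
   paths with p and q arcs into a common sink, i.e. an oriented path with a forward block
   of length p followed by a backward block of length q. By induction, with q <= p: a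
   vertex v of minimum in-degree is either inserted into the first path of a
   (p-1,q)-wedge on the other vertices, or it is dominated by that path and its sink;
   then its in-degree forces p = q and v to dominate the second path, and the wedge is
   rebuilt around v.
   Cut the vertices into m parts of sizes k_{2i-1}+k_{2i}+1, take a wedge in each and
   close the wedges into a cycle. Each of the m connecting arcs lengthens by one either
   the forward block after it or the backward block before it, and no block is
   lengthened twice, so the cycle is a subdivision of C(k_1,...,k_2m) with exactly m
   non-dilated blocks. *)

From mathcomp Require Import all_boot zify.
Set Implicit Arguments. Unset Strict Implicit. Unset Printing Implicit Defensive.

Fixpoint block_pattern (b : bool) (l : seq nat) : seq bool :=
  if l is n :: l' then nseq n b ++ block_pattern (~~ b) l' else [::].

Lemma size_block_pattern b l : size (block_pattern b l) = sumn l.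
Proof. by elim: l b => [|n l IH] b //=; rewrite size_cat size_nseq IH. Qed.

Lemma block_of_cons n l j :
  block_of (n :: l) j = if j < n then 0 else (block_of l (j - n)).+1.
Proof.
rewrite /block_of /= -[1]addn0 iotaDl count_map take0 /= addn0.
case: ltnP => hj.
  by apply/eqP; rewrite -leqn0 leqNgt -has_count; apply/hasP => -[i _ /=]; rewrite add1n /=; lia.
by congr _.+1; apply: eq_count => i /=; rewrite add1n /=; apply/idP/idP; lia.
Qed.

Lemma nth_block_pattern b l j : j < sumn l ->
  nth false (block_pattern b l) j = odd (block_of l j) (+) b.
Proof.
elim: l b j => [|n l IH] b j //= hj.
rewrite block_of_cons nth_cat size_nseq.
case: ltnP => h; first by rewrite nth_nseq h.
by rewrite IH /= 1?addbC ?addbN //; lia.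
Qed.

Fixpoint pairs (k : seq nat) : seq (nat * nat) :=
  if k is x :: y :: k' then (x, y) :: pairs k' else [::].

Fixpoint unpair (ps : seq (nat * nat)) : seq nat :=
  if ps is pq :: ps' then pq.1 :: pq.2 :: unpair ps' else [::].

Definition admissible (pq : nat * nat) := [&& 0 < pq.1, 0 < pq.2 & 2 < pq.1 + pq.2].

Lemma pairs_spec m k : size k = 2 * m -> all (fun x => 0 < x) k ->
  (forall i, i < m -> 3 <= nth 0 k (2 * i) + nth 0 k (2 * i).+1) ->
  [/\ unpair (pairs k) = k, size (pairs k) = m & all admissible (pairs k)].
Proof.
elim: m k => [|m IH] [|x [|y k]] //=; rewrite ?mulnS // => -[sk] /and3P[x0 y0 k0] hk.
have hk' i : i < m -> 3 <= nth 0 k (2 * i) + nth 0 k (2 * i).+1.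
  by move=> lt_im; have := hk i.+1 lt_im; rewrite mulnS.
have [-> -> ->] := IH k sk k0 hk'.
by rewrite /admissible /= x0 y0 (hk 0).
Qed.

Lemma sumn_pairs ps : sumn [seq pq.1 + pq.2 + 1 | pq <- ps] = size ps + sumn (unpair ps).
Proof. by elim: ps => [|[p q] ps IH] //=; rewrite IH; lia. Qed.

Definition wedge_pattern (pq : nat * nat) := nseq pq.1 true ++ nseq pq.2 false.

Fixpoint chain_pattern (ps : seq (nat * nat)) (ds : seq bool) : seq bool :=
  if (ps, ds) is (pq :: ps', d :: ds') then wedge_pattern pq ++ d :: chain_pattern ps' ds'
  else [::].

(* [c] is the orientation of the connecting arc entering the current wedge and [d] that
   of the arc leaving it. *)
Fixpoint chain_lengths (c : bool) (ps : seq (nat * nat)) (ds : seq bool) : seq nat :=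
  if (ps, ds) is (pq :: ps', d :: ds') then (pq.1 + c) :: (pq.2 + ~~ d) :: chain_lengths d ps' ds'
  else [::].

Lemma chain_pattern_blocks (c : bool) ps ds : size ps = size ds ->
  nseq c true ++ chain_pattern ps ds =
  block_pattern true (chain_lengths c ps ds) ++ nseq (last c ds) true.
Proof.
elim: ps ds c => [|[p q] ps IH] [|d ds] c //=; first by rewrite cats0.
case=> /IH {}IH.
rewrite -!catA -IH catA -nseqD addnC /wedge_pattern /=; congr (_ ++ _).
by case: d; rewrite /= ?addn0 ?addn1 // -addn1 nseqD -catA.
Qed.

Lemma subdivision_chain_lengths (c : bool) ps ds : size ps = size ds ->
  subdivision_blocks (unpair ps) (chain_lengths c ps ds).
Proof.
elim: ps ds c => [|[p q] ps IH] [|d ds] c //= [/IH {}IH].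
have [sz le] := IH d; split; first by rewrite /= sz.
by case=> [|[|i]] //= lt_i; rewrite ?leq_addr ?le.
Qed.

Lemma non_dilated_cons x k y l :
  non_dilated (x :: k) (y :: l) = (y == x) + non_dilated k l.
Proof. by rewrite /non_dilated /= -[1]addn0 iotaDl count_map. Qed.

Lemma non_dilated_chain_lengths (c : bool) ps ds : size ps = size ds ->
  non_dilated (unpair ps) (chain_lengths c ps ds) + c = size ps + last c ds.
Proof.
elim: ps ds c => [|[p q] ps IH] [|d ds] c //= [/IH IHd].
rewrite !non_dilated_cons /=.
by have := IHd d; case: c; case: d => /=; rewrite ?addn0 ?addn1 ?eqxx ?eqSS; lia.
Qed.

Lemma sorted_rcons (T : Type) (e : rel T) s x y :
  sorted e (rcons (rcons s x) y) = sorted e (rcons s x) && e x y.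
Proof. by case: s => [|z s] /=; rewrite ?andbT // rcons_path last_rcons. Qed.

(* Clearing the context keeps lia fast in the proofs about wedges. *)
Ltac perm_by_count perm_s :=
  let a := fresh "a" in
  apply/permP => a; move: (permP perm_s a); rewrite -?cats1;
  repeat progress rewrite /= ?count_cat ?count_rev;
  repeat match goal with H : _ |- _ => clear H end; lia.

Lemma uniq_last_neq (T : eqType) (x : T) s : uniq (x :: s) -> s != [::] -> last x s != x.
Proof. by case: s => // y s /andP[xs _] _ /=; apply: contraNneq xs => <-; exact: mem_last. Qed.

Section Tournament.
Variables (T : finType) (adj : rel T).
Hypothesis tour : tournament adj.

Lemma tournament_irr x : adj x x = false.
Proof. by apply/negbTE; case: tour. Qed.

Lemma tournament_total x y : x != y -> adj y x = ~~ adj x y.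
Proof. by rewrite eq_sym; case: tour => _ /[apply]. Qed.

Definition indeg (s : seq T) v := count (adj^~ v) s.

Lemma sum_indeg s : uniq s -> \sum_(v <- s) indeg s v * 2 = size s * (size s).-1.
Proof.
move=> uniq_s.
have countE (a : pred T) : count a s = \sum_(u <- s) a u by rewrite -sumn_count sumnE big_map.
have arcs v : v \in s -> \sum_(u <- s) (adj u v + adj v u) = (size s).-1.
  move=> vs; rewrite -(count_predC (pred1 v)) count_uniq_mem // vs add1n /=.
  rewrite (countE (predC (pred1 v))); apply: eq_bigr => u _ /=.
  have [-> | ne_uv] := eqVneq u v; first by rewrite tournament_irr.
  by rewrite (tournament_total ne_uv); case: (adj u v).
have in_arcs : \sum_(v <- s) indeg s v = \sum_(v <- s) \sum_(u <- s) adj u v.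
  by apply: eq_bigr => v _; rewrite /indeg countE.
have out_arcs : \sum_(v <- s) indeg s v = \sum_(v <- s) \sum_(u <- s) adj v u.
  by rewrite in_arcs exchange_big.
have -> : \sum_(v <- s) indeg s v * 2 = (\sum_(v <- s) indeg s v) * 2 by rewrite big_distrl.
rewrite muln2 -addnn {1}in_arcs out_arcs -big_split /=.
rewrite (eq_big_seq (fun=> (size s).-1)) => [|v vs]; last by rewrite -big_split arcs.
by rewrite big_const_seq count_predT iter_addn_0 mulnC.
Qed.

Lemma exists_low_indeg s : uniq s -> s != [::] ->
  exists2 v, v \in s & indeg s v * 2 <= (size s).-1.
Proof.
move=> uniq_s s_nil.
have [/hasP[v vs low] | /hasPn high] := boolP (has (fun v => indeg s v * 2 <= (size s).-1) s).
  by exists v.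
have : \sum_(v <- s) size s <= \sum_(v <- s) indeg s v * 2.
  rewrite big_seq_cond [leqRHS]big_seq_cond; apply: leq_sum => v /andP[vs _].
  by have := high v vs; rewrite -ltnNge; case: (size s) s_nil.
rewrite sum_indeg // big_const_seq count_predT iter_addn_0.
by case: s s_nil {uniq_s high} => //= x s _; nia.
Qed.

Lemma exists_high_indeg s : uniq s -> s != [::] ->
  exists2 v, v \in s & (size s).-1 <= indeg s v * 2 /\ {in s, forall u, indeg s u <= indeg s v}.
Proof.
move=> uniq_s; case: s uniq_s => // x0 s0 uniq_s _; set s := x0 :: s0.
have [v vs vmax] := @arg_maxnP T x0 (mem s) (indeg s) (mem_head x0 s0).
exists v => //; split=> //; rewrite leqNgt; apply/negP => low.
have : \sum_(u <- s) indeg s u * 2 <= \sum_(u <- s) (size s).-2.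
  rewrite big_seq_cond [leqRHS]big_seq_cond; apply: leq_sum => u /andP[us _].
  by have := vmax u us; lia.
rewrite sum_indeg // big_const_seq count_predT iter_addn_0.
by move: low; rewrite /s /=; case: s0 {s vs vmax uniq_s} => [|y s0] /=; nia.
Qed.

Lemma path_insert v b x W : path adj x (rcons W b) -> v \notin rcons W b ->
  adj x v -> has (adj v) (rcons W b) ->
  exists2 W', path adj x (rcons W' b) & perm_eq W' (v :: W).
Proof.
elim: W x => [|y W IH] x /=.
  by move=> _ _ xv; rewrite orbF => vb; exists [:: v]; rewrite /= ?xv ?vb.
rewrite inE negb_or => /andP[xy yW] /andP[ne_vy vW] xv.
case vy: (adj v y) => /= vW_out.
  by exists [:: v, y & W]; rewrite /= ?xv ?vy.
have yv : adj y v by rewrite tournament_total // vy.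
have [W' yW' permW'] := IH y yW vW yv vW_out.
exists (y :: W'); first by rewrite /= xy.
by apply/permP => a; rewrite /= (permP permW') /= addnCA.
Qed.

Lemma sorted_insert v b W : sorted adj (rcons W b) -> v \notin rcons W b ->
  has (adj v) (rcons W b) -> exists2 W', sorted adj (rcons W' b) & perm_eq W' (v :: W).
Proof.
case: W => [|w W] /=; first by rewrite orbF => _ _ vb; exists [:: v]; rewrite /= ?vb.
rewrite inE negb_or => wW /andP[ne_vw vW].
case vw: (adj v w) => /= vW_out; first by exists [:: v, w & W]; rewrite /= ?vw.
have wv : adj w v by rewrite tournament_total // vw.
have [W' wW' permW'] := path_insert wW vW wv vW_out.
by exists (w :: W') => //; apply/permP => a; rewrite /= (permP permW') /= addnCA.
Qed.

Definition wedge (s : seq T) (p q : nat) (b : T) (W1 W2 : seq T) : Prop :=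
  [/\ size W1 = p, size W2 = q, sorted adj (rcons W1 b), sorted adj (rcons W2 b)
    & perm_eq (b :: W1 ++ W2) s].

Lemma wedge_sym s p q b W1 W2 : wedge s p q b W1 W2 -> wedge s q p b W2 W1.
Proof.
case=> ? ? ? ? perm_s; split=> //; apply: perm_trans perm_s.
by rewrite perm_cons perm_catC.
Qed.

Lemma wedge_perm s s' p q b W1 W2 : perm_eq s s' -> wedge s p q b W1 W2 -> wedge s' p q b W1 W2.
Proof. by move=> perm_ss' [? ? ? ? perm_s]; split=> //; apply: perm_trans perm_ss'. Qed.

Lemma wedge_grow s p q b W1 W2 v : wedge s p q b W1 W2 -> v \notin s ->
  has (adj v) (rcons W1 b) -> exists W1', wedge (v :: s) p.+1 q b W1' W2.
Proof.
case=> size_W1 size_W2 W1b W2b perm_s vs vW1_out.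
have vW1 : v \notin rcons W1 b.
  apply: contra vs; rewrite -(perm_mem perm_s) mem_rcons !inE mem_cat => /orP[-> | ->] //.
  by rewrite orbT.
have [W1' W1'b perm_W1'] := sorted_insert W1b vW1 vW1_out.
exists W1'; split=> //; first by rewrite (perm_size perm_W1') /= size_W1.
apply: (@perm_trans _ (b :: (v :: W1) ++ W2)); first by rewrite perm_cons perm_cat2r.
by perm_by_count perm_s.
Qed.

(* Reroute through the arc between the first vertices y of W1 and z of W2: if z -> y,
   v replaces z in front of the rest of W2; otherwise the last vertex of W2 becomes the
   sink and W1, b, v the second path. *)
Lemma wedge_swap s r b W1 W2 v : 0 < r -> uniq s -> wedge s r r.+1 b W1 W2 ->
  {in rcons W1 b, forall w, adj w v} -> {in W2, forall z, adj v z} ->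
  exists b' W1' W2', wedge (v :: s) r.+1 r.+1 b' W1' W2'.
Proof.
move=> r_gt0 uniq_s [+ + + + perm_s] W1v vW2.
case: W1 perm_s W1v => [|y Y] perm_s W1v; first by move=> /= r0; rewrite -r0 in r_gt0.
case: W2 perm_s vW2 => [|z Z] perm_s vW2 //= size_Y [size_Z] W1b W2b.
have ne_yz : y != z.
  have : uniq ((y :: Y) ++ z :: Z) by move: uniq_s; rewrite -(perm_uniq perm_s) => /andP[].
  rewrite cat_uniq => /and3P[_ /hasPn/(_ z (mem_head z Z)) + _].
  by rewrite inE negb_or eq_sym => /andP[].
case zy: (adj z y).
- case: Z size_Z W2b perm_s vW2 => [|z1 Z] size_Z W2b perm_s vW2; first by rewrite -size_Z in r_gt0.
  exists b, [:: v, z1 & Z], [:: z, y & Y]; split=> /=; rewrite ?size_Z ?size_Y ?zy //.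
  + by rewrite -size_Z.
  + by rewrite vW2 ?inE ?eqxx ?orbT //; case/andP: W2b.
  + by perm_by_count perm_s.
- have yz : adj y z by move: zy; rewrite (tournament_total ne_yz) => /negbFE.
  case/lastP: Z size_Z W2b perm_s vW2 => [|Z zl] size_Z W2b perm_s vW2.
    by rewrite -size_Z in r_gt0.
  exists zl, [:: y, z & Z], (rcons (rcons Y b) v); split.
  + by rewrite /= -size_Z size_rcons.
  + by rewrite !size_rcons size_Y.
  + by move: W2b; rewrite /= yz rcons_path => /andP[].
  + rewrite !sorted_rcons (path_sorted W1b) W1v ?vW2 //.
      by rewrite inE mem_rcons mem_head orbT.
    by rewrite mem_rcons mem_head.
  + by perm_by_count perm_s.
Qed.

(* A vertex b of maximum in-degree has two in-neighbours; if b beats the remaining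
   vertex u, then u, whose in-degree is at most that of b, beats one of them. *)
Lemma wedge_base s : uniq s -> size s = 4 -> exists b W1 W2, wedge s 2 1 b W1 W2.
Proof.
move=> uniq_s size_s; have s_nil : s != [::] by rewrite -size_eq0 size_s.
have [b bs [b_high b_max]] := exists_high_indeg uniq_s s_nil.
have [x1 [x2 [x3 perm_x]]] : exists x1 x2 x3, perm_eq s [:: b; x1; x2; x3].
  move: (perm_to_rem bs) (size_rem bs); rewrite size_s.
  by case: (rem b s) => [|x1 [|x2 [|x3 [|]]]] // perm_s _; exists x1, x2, x3.
have [y1 [y2 [y3 [perm_y /andP[y2b y3b]]]]] :
    exists y1 y2 y3, perm_eq s [:: b; y1; y2; y3] /\ adj y2 b && adj y3 b.
  move: b_high; rewrite size_s /indeg (permP perm_x) /= tournament_irr.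
  case a1: (adj x1 b); case a2: (adj x2 b); case a3: (adj x3 b) => //= _;
    [exists x1, x2, x3 | exists x3, x1, x2 | exists x2, x1, x3 | exists x1, x2, x3];
    by rewrite ?a1 ?a2 ?a3; split=> //; perm_by_count perm_x.
have finish u y z : perm_eq s [:: b; u; y; z] -> adj u y -> adj y b -> adj z b ->
    exists b W1 W2, wedge s 2 1 b W1 W2.
  by move=> perm_s uy yb zb; exists b, [:: u; y], [:: z]; split; rewrite /= ?uy ?yb ?zb // perm_sym.
have := uniq_s; rewrite (perm_uniq perm_y) /= !inE !negb_or.
case/and4P=> /and3P[ne_b1 _ _] /andP[ne12 ne13] _ _.
have [y12 | /negbTE y12] := boolP (adj y1 y2); first exact: finish perm_y y12 y2b y3b.
have y21 : adj y2 y1 by rewrite tournament_total // y12.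
have [y1b | /negbTE y1b] := boolP (adj y1 b).
  by apply: (finish y2 y1 y3 _ y21 y1b y3b); perm_by_count perm_y.
have [y13 | /negbTE y13] := boolP (adj y1 y3).
  by apply: (finish y1 y3 y2 _ y13 y3b y2b); perm_by_count perm_y.
have y31 : adj y3 y1 by rewrite tournament_total // y13.
have by1 : adj b y1 by rewrite tournament_total 1?eq_sym // y1b.
have := b_max y1; rewrite (perm_mem perm_y) !inE eqxx orbT => /(_ isT).
by rewrite /indeg !(permP perm_y) /= !tournament_irr by1 y21 y31 y1b y2b y3b.
Qed.

Lemma wedge_cons s r q b W1 W2 v : uniq s -> v \notin s -> q <= r.+1 -> 2 < r.+1 + q ->
  indeg (v :: s) v * 2 <= r.+1 + q -> wedge s r q b W1 W2 ->
  exists b' W1' W2', wedge (v :: s) r.+1 q b' W1' W2'.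
Proof.
move=> uniq_s vs le_qr pq_gt2 v_low w.
have [vW1 | /hasPn W1v] := boolP (has (adj v) (rcons W1 b)).
  by have [W1' w'] := wedge_grow w vs vW1; exists b, W1', W2.
have v_out u : u \in b :: W1 ++ W2 -> adj u v = ~~ adj v u.
  case: w => _ _ _ _ perm_w; rewrite (perm_mem perm_w) => us.
  by rewrite tournament_total //; apply: contraNneq vs => ->.
have W1v' : {in rcons W1 b, forall u, adj u v}.
  move=> u uW1; rewrite v_out ?W1v //.
  by move: uW1; rewrite mem_rcons !inE mem_cat => /orP[-> | ->]; rewrite ?orbT.
have [r_gt0 balanced W2v] : [/\ 0 < r, q = r.+1 & count (adj^~ v) W2 = 0].
  case: w => size_W1 _ _ _ perm_w.
  have /eqP W1_count : count (adj^~ v) (rcons W1 b) == r.+1.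
    by rewrite -size_W1 -(size_rcons W1 b) -all_count; apply/allP.
  move: v_low; rewrite /indeg /= tournament_irr -(permP perm_w).
  by move: W1_count; rewrite -cats1 /= !count_cat /= => W1_count v_low; split; lia.
have vW2 : {in W2, forall z, adj v z}.
  move=> z zW2; have /hasPn/(_ z zW2) /= zv : ~~ has (adj^~ v) W2 by rewrite has_count W2v.
  by move: (v_out z); rewrite (negbTE zv) inE mem_cat zW2 !orbT => /(_ isT)/esym/negbFE.
rewrite balanced in w *; exact: wedge_swap r_gt0 uniq_s w W1v' vW2.
Qed.

Lemma tournament_wedge n p q s : p + q + 1 = n -> 0 < p -> 0 < q -> 2 < p + q ->
  uniq s -> size s = n -> exists b W1 W2, wedge s p q b W1 W2.
Proof.
elim: n p q s => [|n IH] p q s; first by rewrite addn1.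
wlog le_qp : p q / q <= p.
  move=> hwlog size_pq p_gt0 q_gt0 pq_gt2 uniq_s size_s.
  have [le_qp | /ltnW le_pq] := leqP q p; first exact: hwlog.
  have [b [W1 [W2 w]]] : exists b W1 W2, wedge s q p b W1 W2 by apply: hwlog => //; lia.
  by exists b, W2, W1; apply: wedge_sym.
move=> size_pq p_gt0 q_gt0 pq_gt2 uniq_s size_s.
have [[p2 q1] | n_gt3] : p = 2 /\ q = 1 \/ 3 < n by lia.
  by rewrite p2 q1; apply: wedge_base => //; rewrite size_s; lia.
case: p p_gt0 size_pq pq_gt2 le_qp => // r _ size_pq pq_gt2 le_qp.
have s_nil : s != [::] by rewrite -size_eq0 size_s.
have [v vs v_low] := exists_low_indeg uniq_s s_nil.
have perm_v := perm_to_rem vs; set s' := rem v s in perm_v.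
have /andP[vs' uniq_s'] : uniq (v :: s') by rewrite -(perm_uniq perm_v).
have [b [W1 [W2 w]]] : exists b W1 W2, wedge s' r q b W1 W2.
  by apply: IH; rewrite ?size_rem ?size_s //; lia.
have v_low' : indeg (v :: s') v * 2 <= r.+1 + q.
  by move: v_low; rewrite /indeg (permP perm_v) size_s /=; lia.
have [b' [W1' [W2' w']]] := wedge_cons uniq_s' vs' le_qp pq_gt2 v_low' w.
by exists b', W1', W2'; apply: wedge_perm w'; rewrite perm_sym.
Qed.

Definition arc (o : bool) x y := if o then adj x y else adj y x.

Lemma arc_adj x y : x != y -> arc (adj x y) x y.
Proof. by rewrite /arc; case: ifPn => // /negbTE nxy ne_xy; rewrite tournament_total // nxy. Qed.

Fixpoint opath (x : T) (s : seq T) (O : seq bool) : bool :=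
  if (s, O) is (y :: s', o :: O') then arc o x y && opath y s' O'
  else (s == [::]) && (O == [::]).

Lemma opath_size x s O : opath x s O -> size O = size s.
Proof. by elim: s x O => [|y s IH] x [|o O] //= /andP[_ /IH ->]. Qed.

Lemma opath_cat x s1 s2 O1 O2 : size s1 = size O1 ->
  opath x (s1 ++ s2) (O1 ++ O2) = opath x s1 O1 && opath (last x s1) s2 O2.
Proof. by elim: s1 x O1 => [|y s IH] x [|o O] //= [/IH ->]; rewrite andbA. Qed.

Lemma opath_rcons x s y O o :
  opath x (rcons s y) (rcons O o) = opath x s O && arc o (last x s) y.
Proof.
elim: s x O => [|z s IH] x [|o' O] /=; rewrite ?andbT ?andbF //.
- by case: O => [|? ?]; rewrite andbF.
- by case: (s) => [|? ?]; rewrite andbF.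
- by rewrite IH andbA.
Qed.

Lemma opath_rot x z s O o :
  opath z (x :: rcons s z) (o :: O) = opath x (rcons (rcons s z) x) (rcons O o).
Proof. by rewrite /= opath_rcons last_rcons andbC. Qed.

Lemma opath_nseq_true x s : opath x s (nseq (size s) true) = path adj x s.
Proof. by elim: s x => [|y s IH] x //=; rewrite IH. Qed.

Lemma opath_nseq_false x s :
  opath x s (nseq (size s) false) = path (fun y z => adj z y) x s.
Proof. by elim: s x => [|y s IH] x //=; rewrite IH. Qed.

Lemma opath_nth x s O j : opath x s O -> j < size s ->
  arc (nth false O j) (nth x (x :: s) j) (nth x s j).
Proof.
elim: s x O j => [|y s IH] x [|o O] [|j] //= /andP[// xy ys] lt_js.
have lt_j : j < size s by [].
have lt_j' : j < size (y :: s) by exact: ltnW.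
rewrite (set_nth_default y x lt_j) (set_nth_default y x lt_j').
exact: IH.
Qed.

Lemma contains_cycle_opath l x s : uniq (x :: s) ->
  opath x (rcons s x) (block_pattern true l) -> contains_cycle adj l.
Proof.
move=> uniq_s walk.
have size_s : size (x :: s) = sumn l.
  by rewrite -(size_block_pattern true) (opath_size walk) size_rcons.
exists (fun j => nth x (x :: s) j); split=> [i j /eqP|j].
  by rewrite nth_uniq ?size_s // => /eqP/val_inj.
have lt_j : j < size (rcons s x) by rewrite size_rcons -[(size s).+1]/(size (x :: s)) size_s.
have := opath_nth walk lt_j.
rewrite nth_block_pattern ?addbT //.
have succ n : n < size (x :: s) ->
    nth x (rcons s x) n = nth x (x :: s) (n.+1 %% size (x :: s)).
  rewrite nth_rcons /= => lt_n.
  case: (ltngtP n (size s)) => [lt_ns | lt_sn | ->]; last by rewrite modnn.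
    by rewrite modn_small.
  by move: lt_n; rewrite ltnNge lt_sn.
rewrite size_s in succ; rewrite succ //.
rewrite -rcons_cons nth_rcons size_s ltn_ord /arc.
by case: odd.
Qed.

(* A forward closing arc ([c = true]) belongs to the first block, so the cycle is then
   read from the last vertex of the walk. *)
Lemma contains_cycle_rotated_opath l x s O (c : bool) : uniq (x :: s) ->
  opath x (rcons s x) O -> nseq c true ++ O = block_pattern true l ++ nseq c true ->
  contains_cycle adj l.
Proof.
case: c => uniq_s walk; last first.
  by rewrite cats0 => eqO; apply: (contains_cycle_opath uniq_s); rewrite -eqO.
case/lastP: s uniq_s walk => [|s z] uniq_s walk.
  by case: O walk => [|o [|]] //=; rewrite /arc; case: o; rewrite tournament_irr.
case/lastP: O walk => [|O o] walk; first by have := opath_size walk; rewrite !size_rcons.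
case E: (block_pattern true l) => [|o' O'] /=.
  by case=> /(congr1 size); rewrite size_rcons.
case=> eo'; rewrite cats1 => /rcons_inj[eqO eqo]; rewrite {}eqO {}eqo in walk.
apply: (@contains_cycle_opath l z (x :: s)); last by rewrite E -eo' opath_rot.
by rewrite -rcons_cons rcons_uniq in uniq_s.
Qed.

Lemma opath_wedge x W1 b W2 : sorted adj (rcons (x :: W1) b) -> sorted adj (rcons W2 b) ->
  opath x (W1 ++ b :: rev W2) (wedge_pattern ((size W1).+1, size W2)).
Proof.
move=> /= W1b W2b; rewrite /wedge_pattern -cat_rcons opath_cat ?size_rcons ?size_nseq //.
rewrite -(size_rcons W1 b) opath_nseq_true W1b last_rcons -(size_rev W2) opath_nseq_false.
case: W2 W2b => [|z W2] //= W2b.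
by have := rev_path (fun y z => adj z y) z (rcons W2 b); rewrite last_rcons belast_rcons => ->.
Qed.

Lemma tournament_two_block_path pq s : admissible pq -> uniq s -> size s = pq.1 + pq.2 + 1 ->
  exists2 pc : T * seq T, opath pc.1 pc.2 (wedge_pattern pq) & perm_eq (pc.1 :: pc.2) s.
Proof.
case: pq => p q /and3P[/= p_gt0 q_gt0 pq_gt2] uniq_s size_s.
have [b [[|x W1] [W2 [size_W1 size_W2 W1b W2b perm_s]]]] :=
  tournament_wedge (esym size_s) p_gt0 q_gt0 pq_gt2 uniq_s erefl.
  by rewrite -size_W1 in p_gt0.
exists (x, W1 ++ b :: rev W2); first by rewrite -size_W1 -size_W2; exact: opath_wedge.
by perm_by_count perm_s.
Qed.

Definition chain_vertices (pcs : seq (T * seq T)) := flatten [seq pc.1 :: pc.2 | pc <- pcs].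

Lemma tournament_pieces ps s : all admissible ps -> uniq s ->
  size s = sumn [seq pq.1 + pq.2 + 1 | pq <- ps] ->
  exists2 pcs : seq (T * seq T),
    all2 (fun pc pq => opath pc.1 pc.2 (wedge_pattern pq)) pcs ps & perm_eq (chain_vertices pcs) s.
Proof.
elim: ps s => [|pq ps IH] s /=; first by move=> _ _ /size0nil ->; exists [::].
case/andP=> adm_pq adm_ps uniq_s size_s; set n := pq.1 + pq.2 + 1.
have [pc opath_pc perm_pc] := tournament_two_block_path adm_pq (take_uniq n uniq_s)
  (size_takel (leq_trans (leq_addr _ _) (eq_leq (esym size_s)))).
have size_drop_s : size (drop n s) = sumn [seq pq.1 + pq.2 + 1 | pq <- ps].
  by rewrite size_drop size_s addKn.
have [pcs opath_pcs perm_pcs] := IH (drop n s) adm_ps (drop_uniq n uniq_s) size_drop_s.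
exists (pc :: pcs); first by rewrite /= opath_pc.
by rewrite -[s](cat_take_drop n); apply: perm_cat.
Qed.

Fixpoint connectors (pcs : seq (T * seq T)) (h : T) : seq bool :=
  if pcs is pc :: pcs' then
    adj (last pc.1 pc.2) (head h [seq pc'.1 | pc' <- pcs']) :: connectors pcs' h
  else [::].

Lemma size_connectors pcs h : size (connectors pcs h) = size pcs.
Proof. by elim: pcs => //= pc pcs ->. Qed.

Lemma opath_chain pc pcs ps h :
  all2 (fun pc pq => opath pc.1 pc.2 (wedge_pattern pq)) (pc :: pcs) ps ->
  uniq (chain_vertices (pc :: pcs)) -> last pc.1 (pc.2 ++ chain_vertices pcs) != h ->
  opath pc.1 (rcons (pc.2 ++ chain_vertices pcs) h) (chain_pattern ps (connectors (pc :: pcs) h)).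
Proof.
elim: pcs pc ps => [|pc' pcs IH] [x s] [|pq ps] //=.
  case: ps => [|? ?]; rewrite ?andbT ?andbF // => xs _; rewrite /= cats0 => ne_h.
  by rewrite -cats1 opath_cat ?(opath_size xs) //= xs arc_adj.
case/andP=> xs opath_pcs uniq_xs ne_h.
have /and3P[_ disj uniq_pcs] : [&& uniq (x :: s),
    ~~ has (mem (x :: s)) (chain_vertices (pc' :: pcs)) & uniq (chain_vertices (pc' :: pcs))].
  by rewrite -cat_uniq.
rewrite rcons_cat opath_cat ?(opath_size xs) //= xs arc_adj ?IH //.
  by rewrite last_cat in ne_h.
apply: contraNneq disj => eq_next; apply/hasP; exists pc'.1; first exact: mem_head.
by rewrite -eq_next; exact: mem_last.
Qed.

End Tournament.

Theorem proposition8 (m : nat) (k : seq nat) :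
  2 <= m ->
  size k = 2 * m ->
  all (fun x => 0 < x) k ->
  (forall i, i < m -> 3 <= nth 0 k (2 * i) + nth 0 k (2 * i).+1) ->
  forall (T : finType) (adj : rel T),
    tournament adj ->
    #|T| = m + sumn k ->
    exists l : seq nat,
      [/\ subdivision_blocks k l, m <= non_dilated k l & contains_cycle adj l].
Proof.
move=> m_ge2 size_k k_pos k_sum T adj tour card_T.
have [unpairK size_ps adm_ps] := pairs_spec size_k k_pos k_sum.
have size_T : size (enum T) = sumn [seq pq.1 + pq.2 + 1 | pq <- pairs k].
  by rewrite -cardT card_T sumn_pairs unpairK size_ps.
have [[|[x s] pcs] pieces perm_T] := tournament_pieces tour adm_ps (enum_uniq T) size_T.
  by move: pieces m_ge2; rewrite all2E -size_ps => /andP[/eqP <-].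
set rest := s ++ chain_vertices pcs.
have uniq_walk : uniq (x :: rest) by rewrite (perm_uniq perm_T) enum_uniq.
have rest_nil : rest != [::].
  apply: contraTneq m_ge2 => rest0; move: (perm_size perm_T).
  by rewrite /= -/rest rest0 -cardT card_T /=; lia.
have walk := opath_chain tour pieces uniq_walk (uniq_last_neq uniq_walk rest_nil).
set ds := connectors adj ((x, s) :: pcs) x in walk.
have size_ds : size (pairs k) = size ds.
  by move: pieces; rewrite size_connectors all2E => /andP[/eqP ->].
have last_ds : last (last false ds) ds = last false ds by case: (ds).
exists (chain_lengths (last false ds) (pairs k) ds); split.
- by rewrite -{1}unpairK; exact: subdivision_chain_lengths.
- have := non_dilated_chain_lengths (last false ds) size_ds.
  by rewrite last_ds unpairK size_ps => /eqP; rewrite eqn_add2r => /eqP ->.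
- apply: (contains_cycle_rotated_opath tour uniq_walk walk).
  by rewrite chain_pattern_blocks // last_ds.
Qed.
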